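(* Let $T$ be Takagi's function on $[0,1]$, $T(x)=\sum_{n=1}^\infty 2^{-n}\phi^{(n)}(x)$, with $\phi(x)=2x$ on $[0,1/2]$, $\phi(x)=2-2x$ on $[1/2,1]$. Let $x\in(0,1)$ be non-dyadic, with binary expansion $x=\sum_{k\ge1}2^{-k}\varepsilon_k$, and write $x=\sum_{n\ge1}2^{-a_n}$, $1-x=\sum_{n\ge1}2^{-b_n}$ with $\{a_n\},\{b_n\}$ strictly increasing sequences of positive integers. Then the limit $$\lim_{h\to0}\frac{T(x+h)-T(x)}{h\log_2(1/|h|)}$$ exists if and only if $x$ is density-regular, in which case the limit equals $d_0(x)-d_1(x)$.
   Context: $d_1(x):=\lim_{n\to\infty}\frac1n\sum_{k=1}^n\varepsilon_k$ (when it exists) and $d_0(x):=1-d_1(x)$. The point $x$ is density-regular if $d_1(x)$ exists and one of the following holds: (a) $0<d_1(x)<1$; (b) $d_1(x)=0$ and $a_{n+1}/a_n\to1$; (c) $d_1(x)=1$ and $b_{n+1}/b_n\to1$. A dyadic point is one of the form $k/2^m$. *)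

From Stdlib Require Import Reals Lra.
From Coquelicot Require Import Coquelicot.
Open Scope R_scope.

(* Tent map phi(x) = 2x on [0,1/2], 2-2x on [1/2,1] (extended by the same
   formulas outside [0,1]; only values on [0,1] matter). *)
Definition phi (x : R) : R := if Rle_dec x (/2) then 2 * x else 2 - 2 * x.

Definition takagi (x : R) : R :=
  Series (fun n : nat => (/2) ^ (S n) * Nat.iter (S n) phi x).

Definition dyadic (x : R) : Prop :=
  exists k m : nat, x = INR k / 2 ^ m.

Definition binary_expansion (x : R) (eps : nat -> nat) : Prop :=
  (forall k, (1 <= k)%nat -> (eps k = 0 \/ eps k = 1)%nat) /\
  is_series (fun k : nat => INR (eps (S k)) / 2 ^ (S k)) x.

(* y = sum_{n>=1} 2^{-a_n}, with (a_n)_{n>=1} strictly increasing positive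
   integers; indexed here from 0: a 0, a 1, ... *)
Definition power_sum_repr (y : R) (a : nat -> nat) : Prop :=
  (0 < a 0)%nat /\ (forall n, (a n < a (S n))%nat) /\
  is_series (fun n : nat => / 2 ^ (a n)) y.

(* (1/n) sum_{k=1}^n eps_k, for n >= 1 (here index n corresponds to n+1 digits). *)
Definition digit_avg (eps : nat -> nat) (n : nat) : R :=
  sum_n (fun k => INR (eps (S k))) n / INR (S n).

Definition has_density1 (eps : nat -> nat) (d : R) : Prop :=
  is_lim_seq (digit_avg eps) d.

Definition density_regular_with (eps a b : nat -> nat) (d : R) : Prop :=
  has_density1 eps d /\
  ( (0 < d < 1)
  \/ (d = 0 /\ is_lim_seq (fun n => INR (a (S n)) / INR (a n)) 1)
  \/ (d = 1 /\ is_lim_seq (fun n => INR (b (S n)) / INR (b n)) 1) ).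

Definition density_regular (eps a b : nat -> nat) : Prop :=
  exists d, density_regular_with eps a b d.

Definition log2 (y : R) : R := ln y / ln 2.

Definition takagi_quot (x h : R) : R :=
  (takagi (x + h) - takagi x) / (h * log2 (/ Rabs h)).

From Stdlib Require Import Reals Lra Lia ZArith.
From Coquelicot Require Import Coquelicot.
Open Scope R_scope.

(* T(y) = sum_n 2^-n dist(2^n y, Z). On the J-th dyadic interval around x the first J terms
   are affine with total slope D_J = #{k <= J | eps k = 0} - #{k <= J | eps k = 1}, while
   each later term moves by at most |h| and their tail beyond level N is at most 2^-N.
   So if eps (J+1) = 0 and 2^-N < h <= 2^-(J+1), the quotient is D_J / J up to
   O((N - J) / J). Taking J + 1 = b n and N = b (n+1), the right-hand limit exists and
   equals lim D_J / J = 1 - 2 d_1 when b (n+1) / b n -> 1; this is automatic if d_1 < 1,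
   since a long gap in (b n) is a long run of ones in the expansion. Left-hand limits at x
   are right-hand limits at 1 - x, because T(1 - y) = T(y).
   Conversely, testing the quotient at |h| ~ 2^-m forces D_m / m -> L. At the mirror image
   of x in the dyadic point ending a run of ones the quotient is exactly D_J / log2(1/|h|),
   so if L <> 0 then log2(1/|h|) ~ J, which says b (n+1) / b n -> 1. *)

Lemma pow2_pos n : 0 < 2 ^ n.
Proof. apply pow_lt; lra. Qed.

Lemma inv_pow2_pos n : 0 < / 2 ^ n.
Proof. apply Rinv_0_lt_compat, pow2_pos. Qed.

Lemma inv_pow2_S n : / 2 ^ S n = / 2 * / 2 ^ n.
Proof. simpl. rewrite Rinv_mult. reflexivity. Qed.

Lemma inv_pow2_le m n : (m <= n)%nat -> / 2 ^ n <= / 2 ^ m.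
Proof.
  intros. apply Rinv_le_contravar; [apply pow2_pos|]. apply Rle_pow; lra || assumption.
Qed.

Lemma pow_half_mul n : (/2) ^ n * 2 ^ n = 1.
Proof. rewrite <- Rpow_mult_distr, Rinv_l by lra. apply pow1. Qed.

Lemma Rabs_sub_triang a b c : Rabs (a - c) <= Rabs (a - b) + Rabs (b - c).
Proof. replace (a - c) with ((a - b) + (b - c)) by ring. apply Rabs_triang. Qed.

Lemma Rabs_div_sub1_lt p q e : 0 < p -> Rabs (q - p) < e * p -> Rabs (q / p - 1) < e.
Proof.
  intros Hp Hqp. replace (q / p - 1) with ((q - p) / p) by (field; lra).
  rewrite Rabs_div, (Rabs_right p) by lra.
  apply (Rmult_lt_reg_r p); [assumption|]. unfold Rdiv. rewrite Rmult_assoc, Rinv_l; lra.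
Qed.

Lemma is_lim_0_spec f (l : R) : is_lim f 0 l <->
  (forall e, 0 < e -> exists d, 0 < d /\
     forall h, Rabs h < d -> h <> 0 -> Rabs (f h - l) < e).
Proof.
  rewrite <- is_lim_spec. simpl. unfold locally', within, locally, ball. simpl.
  unfold AbsRing_ball, abs, minus, plus, opp. simpl. rewrite Ropp_0.
  split.
  - intros H e He. destruct (H (mkposreal e He)) as [[d Hd] Hd'].
    exists d. split; [assumption|]. intros h Hh Hn. apply Hd'; [|assumption].
    simpl. rewrite Rplus_0_r. assumption.
  - intros H [e He]. destruct (H e He) as [d [Hd Hd']]. exists (mkposreal d Hd).
    simpl. intros h Hh Hn. rewrite Rplus_0_r in Hh. apply Hd'; assumption.
Qed.

Lemma is_lim_seq_spec' (u : nat -> R) (l : R) : is_lim_seq u l <->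
  (forall e, 0 < e -> exists N, forall n, (N <= n)%nat -> Rabs (u n - l) < e).
Proof.
  rewrite <- is_lim_seq_spec. split.
  - intros H e He. destruct (H (mkposreal e He)) as [N HN]. exists N. assumption.
  - intros H [e He]. destruct (H e He) as [N HN]. exists N. assumption.
Qed.

Lemma is_lim_seq_affine (u : nat -> R) (l a c : R) :
  is_lim_seq u l -> is_lim_seq (fun n => a * u n + c) (a * l + c).
Proof.
  intros Hu. apply is_lim_seq_plus'; [|apply is_lim_seq_const].
  apply (is_lim_seq_scal_l _ a l Hu).
Qed.

Lemma eventually_mul_gt (e A : R) : 0 < e -> exists M, forall m, (M <= m)%nat -> A < e * INR m.
Proof.
  intros He. destruct (INR_unbounded (A / e)) as [M HM]. exists M. intros m Hm.
  pose proof (le_INR _ _ Hm).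
  apply (Rmult_lt_reg_r (/ e)); [apply Rinv_0_lt_compat; lra|].
  rewrite (Rmult_comm e), Rmult_assoc, Rinv_r by lra. unfold Rdiv in HM. lra.
Qed.

Lemma inv_pow2_eventually_lt d : 0 < d -> exists M, forall m, (M <= m)%nat -> / 2 ^ m < d.
Proof.
  intros Hd. destruct (pow_lt_1_zero (/2) ltac:(rewrite Rabs_right; lra) d Hd) as [M HM].
  exists M. intros m Hm. specialize (HM m Hm).
  rewrite pow_inv, Rabs_right in HM by (apply Rle_ge, Rlt_le, inv_pow2_pos). assumption.
Qed.

Lemma strict_incr_lt (p : nat -> nat) : (forall n, (p n < p (S n))%nat) ->
  forall m n, (m < n)%nat -> (p m < p n)%nat.
Proof. intros Hp m n H. induction H as [|n Hmn IH]; [apply Hp|]. specialize (Hp n). lia. Qed.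

Lemma strict_incr_le (p : nat -> nat) : (forall n, (p n < p (S n))%nat) ->
  forall m n, (m <= n)%nat -> (p m <= p n)%nat.
Proof.
  intros Hp m n H. destruct (Nat.eq_dec m n) as [->|]; [lia|].
  pose proof (strict_incr_lt p Hp m n). lia.
Qed.

Lemma strict_incr_ge_id (p : nat -> nat) : (0 < p 0)%nat ->
  (forall n, (p n < p (S n))%nat) -> forall n, (S n <= p n)%nat.
Proof. intros H0 Hp n. induction n; [assumption|]. specialize (Hp n). lia. Qed.

Lemma inv_pow2_bracket (p : nat -> nat) : (forall n, (S n <= p n)%nat) ->
  forall h n0, 0 < h < / 2 ^ p n0 -> exists n, (n0 <= n)%nat /\ / 2 ^ p (S n) < h <= / 2 ^ p n.
Proof.
  intros Hp h n0 [Hh0 Hh1].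
  destruct (inv_pow2_eventually_lt h Hh0) as [M HM].
  assert (Hfar : / 2 ^ p (n0 + M)%nat < h) by (apply HM; specialize (Hp (n0 + M)%nat); lia).
  revert Hfar. generalize M. intros i. induction i as [|i IHi]; intros Hi.
  - rewrite Nat.add_0_r in Hi. lra.
  - destruct (Rlt_dec (/ 2 ^ p (n0 + i)%nat) h) as [Hlt|Hge]; [apply IHi, Hlt|].
    exists (n0 + i)%nat. rewrite <- Nat.add_succ_r. split; [lia|lra].
Qed.

Lemma ln2_pos : 0 < ln 2.
Proof. rewrite <- ln_1. apply ln_increasing; lra. Qed.

Lemma log2_inv_pow2 m : log2 (/ / 2 ^ m) = INR m.
Proof.
  rewrite Rinv_inv. unfold log2. rewrite ln_pow by lra.
  field. pose proof ln2_pos. lra.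
Qed.

Lemma log2_inv_le s t : 0 < s -> s <= t -> log2 (/ t) <= log2 (/ s).
Proof.
  intros Hs Hst. unfold log2, Rdiv. apply Rmult_le_compat_r.
  - left. apply Rinv_0_lt_compat, ln2_pos.
  - apply ln_le; [apply Rinv_0_lt_compat; lra|]. apply Rinv_le_contravar; assumption.
Qed.

Lemma log2_inv_lt s t : 0 < s -> s < t -> log2 (/ t) < log2 (/ s).
Proof.
  intros Hs Hst. unfold log2, Rdiv. apply Rmult_lt_compat_r.
  - apply Rinv_0_lt_compat, ln2_pos.
  - apply ln_increasing; [apply Rinv_0_lt_compat; lra|]. apply Rinv_lt_contravar; nra.
Qed.

Definition dist_Z (z : R) : R :=
  Rmin (z - IZR (Int_part z)) (IZR (Int_part z) + 1 - z).

Lemma Int_part_bounds z : IZR (Int_part z) <= z < IZR (Int_part z) + 1.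
Proof. destruct (base_Int_part z); lra. Qed.

Lemma dist_Z_le z (k : Z) : dist_Z z <= Rabs (z - IZR k).
Proof.
  unfold dist_Z. pose proof (Int_part_bounds z).
  destruct (Z.le_gt_cases k (Int_part z)) as [Hk|Hk].
  - apply IZR_le in Hk. eapply Rle_trans; [apply Rmin_l|].
    rewrite Rabs_right; lra.
  - assert (Hk' : (Int_part z + 1 <= k)%Z) by lia.
    apply IZR_le in Hk'. rewrite plus_IZR in Hk'.
    eapply Rle_trans; [apply Rmin_r|]. rewrite Rabs_left1; lra.
Qed.

Lemma dist_Z_attained z : exists k : Z, dist_Z z = Rabs (z - IZR k).
Proof.
  unfold dist_Z. pose proof (Int_part_bounds z).
  destruct (Rle_dec (z - IZR (Int_part z)) (IZR (Int_part z) + 1 - z)).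
  - exists (Int_part z). rewrite Rmin_left by lra. rewrite Rabs_right; lra.
  - exists (Int_part z + 1)%Z. rewrite Rmin_right, plus_IZR by lra.
    rewrite Rabs_left1; lra.
Qed.

Lemma dist_Z_ge0 z : 0 <= dist_Z z.
Proof. destruct (dist_Z_attained z) as [k ->]. apply Rabs_pos. Qed.

Lemma dist_Z_le_half z : dist_Z z <= /2.
Proof.
  unfold dist_Z. pose proof (Int_part_bounds z).
  apply Rmin_case_strong; intros; lra.
Qed.

Lemma dist_Z_lipschitz y z : Rabs (dist_Z y - dist_Z z) <= Rabs (y - z).
Proof.
  destruct (dist_Z_attained y) as [ky Hy], (dist_Z_attained z) as [kz Hz].
  pose proof (dist_Z_le y kz). pose proof (dist_Z_le z ky).
  pose proof (Rabs_sub_triang y z (IZR kz)).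
  pose proof (Rabs_sub_triang z y (IZR ky)). rewrite (Rabs_minus_sym z y) in *.
  apply Rabs_le. lra.
Qed.

Lemma dist_Z_invariant (f : R -> R) (g : Z -> Z) :
  (forall z k, Rabs (f z - IZR (g k)) = Rabs (z - IZR k)) ->
  (forall k, exists k', g k' = k) ->
  forall z, dist_Z (f z) = dist_Z z.
Proof.
  intros Hfg Hg z. apply Rle_antisym.
  - destruct (dist_Z_attained z) as [k ->]. rewrite <- Hfg. apply dist_Z_le.
  - destruct (dist_Z_attained (f z)) as [k ->]. destruct (Hg k) as [k' <-].
    rewrite Hfg. apply dist_Z_le.
Qed.

Lemma dist_Z_opp z : dist_Z (- z) = dist_Z z.
Proof.
  apply (dist_Z_invariant Ropp Z.opp).
  - intros y k. rewrite opp_IZR, <- Rabs_Ropp. f_equal. ring.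
  - intros k. exists (- k)%Z. lia.
Qed.

Lemma dist_Z_shift z (m : Z) : dist_Z (z + IZR m) = dist_Z z.
Proof.
  apply (dist_Z_invariant (fun y => y + IZR m) (fun k => k + m)%Z).
  - intros y k. rewrite plus_IZR. f_equal. ring.
  - intros k. exists (k - m)%Z. lia.
Qed.

Lemma dist_Z_reflect (K : Z) t : dist_Z (IZR K + t) = dist_Z (IZR K - t).
Proof.
  rewrite Rplus_comm, dist_Z_shift.
  replace (IZR K - t) with (- t + IZR K) by ring.
  rewrite dist_Z_shift, dist_Z_opp. reflexivity.
Qed.

Lemma dist_Z_reflect_half (K : Z) t :
  dist_Z (IZR K + /2 + t) = dist_Z (IZR K + /2 - t).
Proof.
  rewrite <- (dist_Z_opp (IZR K + /2 - t)).
  replace (IZR K + /2 + t) with (- (IZR K + /2 - t) + IZR (2 * K + 1)).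
  - apply dist_Z_shift.
  - rewrite plus_IZR, mult_IZR. simpl. lra.
Qed.

Lemma dist_Z_near_int (K : Z) s : 0 <= s <= /2 -> dist_Z (IZR K + s) = s.
Proof.
  intros Hs. apply Rle_antisym.
  - replace s with (Rabs (IZR K + s - IZR K)) at 2 by (rewrite Rabs_right; lra).
    apply dist_Z_le.
  - destruct (dist_Z_attained (IZR K + s)) as [k ->].
    destruct (Z.le_gt_cases k K) as [Hk|Hk]; apply IZR_le in Hk || apply IZR_lt in Hk.
    + rewrite Rabs_right; lra.
    + assert (IZR (K + 1) <= IZR k) by (apply IZR_le; apply lt_IZR in Hk; lia).
      rewrite plus_IZR in H. rewrite Rabs_left1; lra.
Qed.

Lemma dist_Z_near_half (K : Z) s :
  0 <= s <= /2 -> dist_Z (IZR K + /2 + s) = /2 - s.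
Proof.
  intros Hs. replace (IZR K + /2 + s) with (- (IZR (- (K + 1)) + (/2 - s))).
  - rewrite dist_Z_opp. apply dist_Z_near_int. lra.
  - rewrite opp_IZR, plus_IZR. simpl. lra.
Qed.

Lemma dist_Z_double z : dist_Z (2 * z) = dist_Z (2 * dist_Z z).
Proof.
  destruct (dist_Z_attained z) as [k ->].
  destruct (Rle_dec 0 (z - IZR k)).
  - rewrite Rabs_right by lra.
    replace (2 * z) with (2 * (z - IZR k) + IZR (2 * k)) by (rewrite mult_IZR; simpl; ring).
    apply dist_Z_shift.
  - rewrite Rabs_left by lra.
    replace (2 * z) with (- (2 * (- (z - IZR k))) + IZR (2 * k))
      by (rewrite mult_IZR; simpl; ring).
    rewrite dist_Z_shift. apply dist_Z_opp.
Qed.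

Lemma phi_on_unit y : 0 <= y <= 1 -> phi y = 2 * dist_Z y.
Proof.
  intros Hy. unfold phi. destruct (Rle_dec y (/2)).
  - replace y with (IZR 0 + y) at 2 by (simpl; ring).
    rewrite dist_Z_near_int by lra. ring.
  - replace y with (IZR 0 + /2 + (y - /2)) at 2 by (simpl; ring).
    rewrite dist_Z_near_half by lra. lra.
Qed.

Lemma iter_phi n y : 0 <= y <= 1 -> Nat.iter (S n) phi y = 2 * dist_Z (2 ^ n * y).
Proof.
  intros Hy. induction n as [|n IHn].
  - simpl. rewrite Rmult_1_l. now apply phi_on_unit.
  - change (Nat.iter (S (S n)) phi y) with (phi (Nat.iter (S n) phi y)).
    pose proof (dist_Z_ge0 (2 ^ n * y)). pose proof (dist_Z_le_half (2 ^ n * y)).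
    rewrite IHn, phi_on_unit, <- dist_Z_double by lra.
    simpl. do 2 f_equal. ring.
Qed.

Fixpoint takagi_sum (K : nat) (y : R) : R :=
  match K with
  | O => 0
  | S K' => takagi_sum K' y + (/2) ^ K' * dist_Z (2 ^ K' * y)
  end.

Lemma ex_series_takagi y : ex_series (fun n => (/2) ^ n * dist_Z (2 ^ n * y)).
Proof.
  apply (@ex_series_le R_AbsRing R_CompleteNormedModule _ (fun n => (/2) ^ n)).
  - intros n. change norm with Rabs. simpl.
    pose proof (dist_Z_le_half (2 ^ n * y)). pose proof (dist_Z_ge0 (2 ^ n * y)).
    assert (0 < (/2) ^ n) by (apply pow_lt; lra).
    rewrite Rabs_right by (apply Rle_ge, Rmult_le_pos; lra). nra.
  - apply ex_series_geom. rewrite Rabs_right; lra.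
Qed.

Lemma is_lim_seq_takagi_sum y :
  0 <= y <= 1 -> is_lim_seq (fun K => takagi_sum K y) (takagi y).
Proof.
  intros Hy.
  assert (Hser : takagi y = Series (fun n => (/2) ^ n * dist_Z (2 ^ n * y))).
  { apply Series_ext. intros n. rewrite iter_phi by assumption. simpl. field. }
  rewrite Hser. apply is_lim_seq_incr_1.
  eapply is_lim_seq_ext; [|exact (Series_correct _ (ex_series_takagi y))].
  intros K. induction K as [|K IHK]; simpl.
  - rewrite sum_O. simpl. ring.
  - rewrite sum_Sn, IHK. reflexivity.
Qed.

Lemma takagi_diff_le x y c B K0 : 0 <= x <= 1 -> 0 <= y <= 1 ->
  (forall K, (K0 <= K)%nat -> Rabs (takagi_sum K y - takagi_sum K x - c) <= B) ->
  Rabs (takagi y - takagi x - c) <= B.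
Proof.
  intros Hx Hy HB.
  assert (Hl : is_lim_seq (fun K => Rabs (takagi_sum (K + K0) y - takagi_sum (K + K0) x - c))
                 (Rabs (takagi y - takagi x - c))).
  { apply (is_lim_seq_abs _ (Finite (takagi y - takagi x - c))).
    apply (is_lim_seq_minus' _ (fun _ => c)); [|apply is_lim_seq_const].
    apply is_lim_seq_minus';
      apply (is_lim_seq_subseq (fun K => takagi_sum K _) _ (fun K => (K + K0)%nat));
      try (apply is_lim_seq_takagi_sum; assumption);
      intros P [N HN]; exists N; intros n Hn; apply HN; lia. }
  apply (is_lim_seq_le _ (fun _ => B) _ _ (fun K => HB _ (Nat.le_add_l K0 K)) Hl
           (is_lim_seq_const B)).
Qed.

Section TakagiSumIncrements.
Variables x y : R.

Let dT K := takagi_sum K y - takagi_sum K x.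

Lemma takagi_sum_step_le K :
  Rabs (dT (S K) - dT K) <= Rmin (/ 2 ^ S K) (Rabs (y - x)).
Proof.
  unfold dT. simpl takagi_sum.
  replace (takagi_sum K y + (/ 2) ^ K * dist_Z (2 ^ K * y)
           - (takagi_sum K x + (/ 2) ^ K * dist_Z (2 ^ K * x))
           - (takagi_sum K y - takagi_sum K x))
    with ((/ 2) ^ K * (dist_Z (2 ^ K * y) - dist_Z (2 ^ K * x))) by ring.
  assert (Hp : 0 < (/2) ^ K) by (apply pow_lt; lra).
  rewrite Rabs_mult, (Rabs_right ((/2) ^ K)) by lra.
  apply Rmin_glb.
  - pose proof (dist_Z_ge0 (2 ^ K * y)). pose proof (dist_Z_ge0 (2 ^ K * x)).
    pose proof (dist_Z_le_half (2 ^ K * y)). pose proof (dist_Z_le_half (2 ^ K * x)).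
    replace (/ 2 ^ S K) with ((/2) ^ K * /2)
      by (rewrite inv_pow2_S, pow_inv; ring).
    apply Rmult_le_compat_l; [lra|]. apply Rabs_le. lra.
  - eapply Rle_trans; [apply Rmult_le_compat_l, dist_Z_lipschitz; lra|].
    rewrite <- Rmult_minus_distr_l, Rabs_mult, (Rabs_right (2 ^ K))
      by (apply Rle_ge, pow_le; lra).
    rewrite <- Rmult_assoc, pow_half_mul. lra.
Qed.

Lemma takagi_sum_tail_le N i : Rabs (dT (N + i) - dT N) <= / 2 ^ N - / 2 ^ (N + i).
Proof.
  induction i as [|i IHi].
  - rewrite Nat.add_0_r, Rminus_diag, Rabs_R0. lra.
  - rewrite Nat.add_succ_r.
    pose proof (Rmin_l (/ 2 ^ S (N + i)) (Rabs (y - x))).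
    pose proof (takagi_sum_step_le (N + i)).
    pose proof (Rabs_sub_triang (dT (S (N + i))) (dT (N + i)) (dT N)).
    rewrite inv_pow2_S in *. lra.
Qed.

Lemma takagi_sum_lipschitz J i : Rabs (dT (J + i) - dT J) <= INR i * Rabs (y - x).
Proof.
  induction i as [|i IHi].
  - rewrite Nat.add_0_r, Rminus_diag, Rabs_R0. simpl. lra.
  - rewrite Nat.add_succ_r, S_INR.
    pose proof (Rmin_r (/ 2 ^ S (J + i)) (Rabs (y - x))).
    pose proof (takagi_sum_step_le (J + i)).
    pose proof (Rabs_sub_triang (dT (S (J + i))) (dT (J + i)) (dT J)).
    lra.
Qed.

End TakagiSumIncrements.

Definition dyadic_at (n : nat) (z : R) : Prop := exists M : nat, z = INR M / 2 ^ n.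

Lemma dyadic_at_0 n : dyadic_at n 0.
Proof. exists 0%nat. simpl. unfold Rdiv. ring. Qed.

Lemma dyadic_at_add n z c p :
  (p <= n)%nat -> dyadic_at n z -> dyadic_at n (z + INR c / 2 ^ p).
Proof.
  intros Hp [M ->]. exists (M + c * 2 ^ (n - p))%nat.
  rewrite plus_INR, mult_INR, pow_INR. simpl INR. replace (1 + 1) with 2 by ring.
  replace n with (p + (n - p))%nat at 1 3 by lia. rewrite pow_add.
  pose proof (pow2_pos p). pose proof (pow2_pos (n - p)). field. lra.
Qed.

Lemma dyadic_at_unique n A A' z : dyadic_at n A -> dyadic_at n A' ->
  0 < z - A < / 2 ^ n -> 0 < z - A' < / 2 ^ n -> A = A'.
Proof.
  intros [M ->] [M' ->] H1 H2. pose proof (pow2_pos n).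
  assert (Hlt : forall P Q : nat, INR P / 2 ^ n < INR Q / 2 ^ n + / 2 ^ n -> (P <= Q)%nat).
  { intros P Q HPQ. apply Nat.lt_succ_r, INR_lt. rewrite S_INR.
    apply (Rmult_lt_compat_r (2 ^ n)) in HPQ; [|assumption].
    field_simplify in HPQ; lra. }
  f_equal. f_equal. apply Nat.le_antisymm; apply Hlt; lra.
Qed.

Section DyadicSums.
Variables (c p : nat -> nat).
Hypothesis c_le1 : forall j, (c j <= 1)%nat.
Hypothesis p_incr : forall n, (p n < p (S n))%nat.

Fixpoint dsum (k : nat) : R :=
  match k with O => 0 | S k' => dsum k' + INR (c k') / 2 ^ p k' end.

Lemma dsum_incr_le k i : 0 <= dsum (k + i) - dsum k <= 2 / 2 ^ p k - 2 / 2 ^ p (k + i)%nat.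
Proof.
  induction i as [|i IHi].
  - rewrite Nat.add_0_r. lra.
  - rewrite Nat.add_succ_r. simpl dsum. set (j := (k + i)%nat) in *.
    pose proof (c_le1 j) as Hc. apply le_INR in Hc. simpl INR in Hc.
    pose proof (pos_INR (c j)).
    assert (Hpj : (S (p j) <= p (S j))%nat) by apply p_incr.
    pose proof (inv_pow2_le _ _ Hpj) as Hle. rewrite inv_pow2_S in Hle.
    pose proof (inv_pow2_pos (p j)).
    assert (INR (c j) / 2 ^ p j <= / 2 ^ p j) by (unfold Rdiv; nra).
    assert (0 <= INR (c j) / 2 ^ p j) by (unfold Rdiv; nra).
    unfold Rdiv in *. lra.
Qed.

Lemma dsum_series_le z k :
  is_series (fun j => INR (c j) / 2 ^ p j) z -> 0 <= z - dsum k <= 2 / 2 ^ p k.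
Proof.
  intros Hs.
  assert (Hl : is_lim_seq (fun i => dsum (S (k + i))) z).
  { apply (is_lim_seq_subseq (fun m => dsum (S m)) _ (fun i => (k + i)%nat)).
    - intros P [N HN]. exists N. intros n Hn. apply HN. lia.
    - eapply is_lim_seq_ext; [|exact Hs]. intros m. induction m as [|m IHm].
      + rewrite sum_O. simpl. ring.
      + rewrite sum_Sn, IHm. reflexivity. }
  assert (Hb : forall i, dsum k <= dsum (S (k + i)) <= dsum k + 2 / 2 ^ p k).
  { intros i. pose proof (dsum_incr_le k (S i)).
    pose proof (inv_pow2_pos (p (k + S i)%nat)).
    rewrite Nat.add_succ_r in *. unfold Rdiv in *. lra. }
  assert (Rbar_le (dsum k) z)
    by (apply (is_lim_seq_le (fun _ => dsum k) _ _ _ (fun i => proj1 (Hb i)));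
        [apply is_lim_seq_const|exact Hl]).
  assert (Rbar_le z (dsum k + 2 / 2 ^ p k))
    by (apply (is_lim_seq_le _ (fun _ => dsum k + 2 / 2 ^ p k) _ _ (fun i => proj2 (Hb i)));
        [exact Hl|apply is_lim_seq_const]).
  simpl in *. lra.
Qed.

Lemma dyadic_at_dsum k n : (forall j, (j < k)%nat -> (p j <= n)%nat) -> dyadic_at n (dsum k).
Proof.
  induction k as [|k IHk]; intros H.
  - apply dyadic_at_0.
  - apply dyadic_at_add; [apply H; lia|]. apply IHk. intros. apply H. lia.
Qed.

Lemma dsum_series_lt z k :
  is_series (fun j => INR (c j) / 2 ^ p j) z -> ~ dyadic z -> 0 < z - dsum k < 2 / 2 ^ p k.
Proof.
  intros Hs Hd. pose proof (dsum_series_le z k Hs).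
  destruct (dyadic_at_dsum k (p k)) as [M HM].
  { intros j Hj. pose proof (strict_incr_lt p p_incr j k Hj). lia. }
  split.
  - destruct (Req_dec z (dsum k)) as [Heq|]; [|lra]. exfalso. apply Hd.
    exists M, (p k). lra.
  - destruct (Req_dec z (dsum k + 2 / 2 ^ p k)) as [Heq|]; [|lra]. exfalso. apply Hd.
    exists (M + 2)%nat, (p k). rewrite Heq, HM, plus_INR. simpl INR. unfold Rdiv. ring.
Qed.

End DyadicSums.

(* The error term B comes from the linear approximation T(x+h) - T(x) ~ h D, and e from
   replacing log2 (1/|h|) by J. *)
Lemma takagi_quot_approx x h D (J B e : R) :
  h <> 0 -> 0 < J -> J <= log2 (/ Rabs h) <= J + e -> 0 <= e -> Rabs D <= J ->
  Rabs (takagi (x + h) - takagi x - h * D) <= B * Rabs h ->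
  Rabs (takagi_quot x h - D / J) <= (B + e) / J.
Proof.
  intros Hh HJ [Hl1 Hl2] He HD HB. unfold takagi_quot.
  set (l := log2 (/ Rabs h)) in *. set (T := takagi (x + h) - takagi x) in *.
  assert (Ha : 0 < Rabs h) by (apply Rabs_pos_lt; assumption).
  assert (HB0 : 0 <= B) by (pose proof (Rabs_pos (T - h * D)); nra).
  replace (T / (h * l) - D / J) with ((T - h * D) / (h * l) + D * (J - l) / (l * J))
    by (field; repeat split; lra).
  eapply Rle_trans; [apply Rabs_triang|].
  assert (Hl : 0 < l) by lra.
  assert (Hlin : Rabs ((T - h * D) / (h * l)) <= B / J).
  { unfold Rdiv. rewrite Rabs_mult, Rabs_inv, Rabs_mult, (Rabs_right l), Rinv_mult by lra.
    apply Rle_trans with (B * Rabs h * (/ Rabs h * / l)).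
    - apply Rmult_le_compat_r; [|assumption].
      apply Rmult_le_pos; left; apply Rinv_0_lt_compat; lra.
    - replace (B * Rabs h * (/ Rabs h * / l)) with (B * / l) by (field; lra).
      apply Rmult_le_compat_l; [assumption|]. apply Rinv_le_contravar; lra. }
  assert (Hlog : Rabs (D * (J - l) / (l * J)) <= e / J).
  { unfold Rdiv. rewrite Rabs_mult, Rabs_inv, !Rabs_mult, (Rabs_right l), (Rabs_right J),
      Rabs_minus_sym, (Rabs_right (l - J)), Rinv_mult by lra.
    apply Rle_trans with (J * e * (/ l * / J)).
    - apply Rmult_le_compat_r; [apply Rmult_le_pos; left; apply Rinv_0_lt_compat; lra|].
      apply Rmult_le_compat; try lra. apply Rabs_pos.
    - replace (J * e * (/ l * / J)) with (e * / l) by (field; lra).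
      apply Rmult_le_compat_l; [assumption|]. apply Rinv_le_contravar; lra. }
  unfold Rdiv in *. lra.
Qed.

Fixpoint digit_balance (eps : nat -> nat) (k : nat) : R :=
  match k with O => 0 | S k' => digit_balance eps k' + (1 - 2 * INR (eps k)) end.

Lemma digit_balance_abs_le eps k : (forall i, (1 <= i)%nat -> (eps i <= 1)%nat) ->
  Rabs (digit_balance eps k) <= INR k.
Proof.
  intros He. induction k as [|k IHk]; [simpl; rewrite Rabs_R0; lra|].
  simpl digit_balance. rewrite S_INR.
  assert (Rabs (1 - 2 * INR (eps (S k))) = 1).
  { assert (eps (S k) = 0%nat \/ eps (S k) = 1%nat) as [E|E] by (specialize (He (S k)); lia);
      rewrite E; simpl; [rewrite Rabs_right|rewrite Rabs_left]; lra. }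
  pose proof (Rabs_triang (digit_balance eps k) (1 - 2 * INR (eps (S k)))). lra.
Qed.

Lemma digit_balance_run eps p i : (forall j, (p < j <= p + i)%nat -> eps j = 1%nat) ->
  digit_balance eps (p + i) = digit_balance eps p - INR i.
Proof.
  intros Hr. induction i as [|i IHi]; [rewrite Nat.add_0_r; simpl; ring|].
  rewrite Nat.add_succ_r. simpl digit_balance.
  rewrite IHi by (intros; apply Hr; lia). rewrite Hr by lia. rewrite (S_INR i). simpl INR. ring.
Qed.

Definition balance_avg eps m := digit_balance eps m / INR m.

Lemma has_density1_iff eps d :
  has_density1 eps d <-> is_lim_seq (balance_avg eps) (1 - 2 * d).
Proof.
  assert (Havg : forall n, digit_avg eps n = (1 - balance_avg eps (S n)) / 2).
  { intros n. unfold digit_avg, balance_avg.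
    assert (Hsum : sum_n (fun k => INR (eps (S k))) n
                   = (INR (S n) - digit_balance eps (S n)) / 2).
    { induction n as [|n IHn].
      - rewrite sum_O. simpl. field.
      - rewrite sum_Sn, IHn. change plus with Rplus.
        match goal with |- ?u = ?v => change (@eq R u v) end.
        rewrite (S_INR (S n)). simpl digit_balance. field. }
    rewrite Hsum. field. pose proof (pos_INR n). rewrite S_INR. lra. }
  unfold has_density1. rewrite (is_lim_seq_incr_1 (balance_avg eps)). split; intros Hl.
  - replace (1 - 2 * d) with (-2 * d + 1) by ring.
    eapply is_lim_seq_ext; [|exact (is_lim_seq_affine _ _ (-2) 1 Hl)].
    intros n. cbv beta. rewrite Havg. field.
  - replace d with (- / 2 * (1 - 2 * d) + / 2) by field.
    eapply is_lim_seq_ext; [|exact (is_lim_seq_affine _ _ (- / 2) (/ 2) Hl)].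
    intros n. cbv beta. rewrite Havg. field.
Qed.

Lemma balance_avg_lim_bounded eps (l : R) : (forall i, (1 <= i)%nat -> (eps i <= 1)%nat) ->
  is_lim_seq (balance_avg eps) l -> -1 <= l <= 1.
Proof.
  intros He Hl. apply Rabs_le_between.
  assert (Rbar_le (Rabs l) 1); [|assumption].
  apply (is_lim_seq_le (fun n => Rabs (balance_avg eps n)) (fun _ => 1));
    [|apply (is_lim_seq_abs _ l Hl)|apply is_lim_seq_const].
  intros [|n]; unfold balance_avg.
  - simpl. unfold Rdiv. rewrite Rmult_0_l, Rabs_R0. lra.
  - pose proof (digit_balance_abs_le eps (S n) He).
    assert (0 < INR (S n)) by (apply lt_0_INR; lia).
    rewrite Rabs_div, (Rabs_right (INR (S n))) by lra.
    apply (Rmult_le_reg_r (INR (S n))); [assumption|]. unfold Rdiv.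
    rewrite Rmult_assoc, Rinv_l; lra.
Qed.

Definition digit_compl (eps : nat -> nat) k := (1 - eps k)%nat.

Lemma digit_balance_compl eps k : (forall i, (1 <= i)%nat -> (eps i <= 1)%nat) ->
  digit_balance (digit_compl eps) k = - digit_balance eps k.
Proof.
  intros He. induction k as [|k IHk]; simpl; [ring|].
  rewrite IHk. unfold digit_compl. rewrite minus_INR by (apply He; lia). simpl. ring.
Qed.

Lemma is_lim_seq_balance_avg_compl eps (c : R) :
  (forall i, (1 <= i)%nat -> (eps i <= 1)%nat) ->
  is_lim_seq (balance_avg eps) c -> is_lim_seq (balance_avg (digit_compl eps)) (- c).
Proof.
  intros He Hc. eapply is_lim_seq_ext; [|exact (proj1 (is_lim_seq_opp _ _) Hc)].
  intros n. unfold balance_avg. rewrite digit_balance_compl by assumption.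
  unfold Rdiv. ring.
Qed.

Lemma binary_expansion_compl x eps :
  binary_expansion x eps -> binary_expansion (1 - x) (digit_compl eps).
Proof.
  intros [He Hs]. split.
  - intros k Hk. unfold digit_compl. destruct (He k Hk); lia.
  - assert (Hhalf : is_series (fun k => / 2 ^ S k) 1).
    { assert (H := is_series_scal (/2) _ _ (is_series_geom (/2) ltac:(rewrite Rabs_right; lra))).
      replace 1 with (scal (/2) (/ (1 - /2)) : R) by (change scal with Rmult; simpl; field).
      eapply is_series_ext; [|exact H]. intros n. change scal with Rmult. simpl.
      rewrite Rinv_mult, pow_inv. reflexivity. }
    eapply is_series_ext; [|exact (is_series_minus _ _ _ _ Hhalf Hs)].
    intros n. change (plus ?u (opp ?v)) with (u - v). unfold digit_compl.
    destruct (He (S n) ltac:(lia)) as [E|E]; rewrite E; simpl; field;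
      apply pow_nonzero; lra.
Qed.

Lemma nondyadic_compl x : 0 < x < 1 -> ~ dyadic x -> ~ dyadic (1 - x).
Proof.
  intros Hx Hd [k [m Hk]]. apply Hd. pose proof (pow2_pos m).
  assert (Hkm : (k < 2 ^ m)%nat).
  { apply INR_lt. rewrite pow_INR. simpl INR. replace (1 + 1) with 2 by ring.
    apply (Rmult_lt_reg_r (/ 2 ^ m)); [apply inv_pow2_pos|].
    rewrite Rinv_r by lra. unfold Rdiv in Hk. lra. }
  exists (2 ^ m - k)%nat, m.
  rewrite minus_INR, pow_INR by lia. simpl INR. replace (1 + 1) with 2 by ring.
  replace x with (1 - (1 - x)) by ring. rewrite Hk. field. lra.
Qed.

Lemma takagi_compl y : 0 <= y <= 1 -> takagi (1 - y) = takagi y.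
Proof.
  intros Hy. unfold takagi. apply Series_ext. intros n.
  rewrite !iter_phi by lra. do 2 f_equal.
  replace (2 ^ n * (1 - y)) with (- (2 ^ n * y) + IZR (Z.of_nat (2 ^ n))).
  - rewrite dist_Z_shift, dist_Z_opp. reflexivity.
  - rewrite <- INR_IZR_INZ, pow_INR. simpl INR. replace (1 + 1) with 2 by ring. ring.
Qed.

Lemma takagi_quot_compl x h : Rabs h <= Rmin x (1 - x) ->
  takagi_quot (1 - x) h = - takagi_quot x (- h).
Proof.
  intros Hh. pose proof (Rmin_l x (1 - x)). pose proof (Rmin_r x (1 - x)).
  pose proof (Rabs_pos h). apply Rabs_le_between in Hh.
  unfold takagi_quot. rewrite Rabs_Ropp.
  replace (1 - x + h) with (1 - (x - h)) by ring. replace (x + - h) with (x - h) by ring.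
  rewrite !takagi_compl by lra.
  replace (- h * log2 (/ Rabs h)) with (- (h * log2 (/ Rabs h))) by ring.
  rewrite Rdiv_opp_r. ring.
Qed.

Section Truncation.
Variables (x : R) (eps : nat -> nat).
Hypothesis x_expansion : binary_expansion x eps.
Hypothesis x_nondyadic : ~ dyadic x.

Definition trunc k := dsum (fun j => eps (S j)) S k.

Lemma digit01 k : (1 <= k)%nat -> eps k = 0%nat \/ eps k = 1%nat.
Proof. apply x_expansion. Qed.

Lemma digit_le1 i : (1 <= i)%nat -> (eps i <= 1)%nat.
Proof. intros Hi. destruct (digit01 i Hi); lia. Qed.

Lemma trunc_S k : trunc (S k) = trunc k + INR (eps (S k)) / 2 ^ S k.
Proof. reflexivity. Qed.

Lemma trunc_lt k : 0 < x - trunc k < / 2 ^ k.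
Proof.
  replace (/ 2 ^ k) with (2 / 2 ^ S k) by (simpl; field; apply pow_nonzero; lra).
  apply dsum_series_lt; [| |apply x_expansion|assumption].
  - intros j. destruct (digit01 (S j)); lia.
  - intros n. lia.
Qed.

Lemma dyadic_at_trunc k n : (k <= n)%nat -> dyadic_at n (trunc k).
Proof. intros Hk. apply dyadic_at_dsum. intros j Hj. lia. Qed.

Lemma trunc_nested m J : (m <= J)%nat ->
  trunc m <= trunc J /\ trunc J + / 2 ^ J <= trunc m + / 2 ^ m.
Proof.
  intros HmJ. replace J with (m + (J - m))%nat by lia. induction (J - m)%nat as [|i IHi].
  - rewrite Nat.add_0_r. lra.
  - rewrite Nat.add_succ_r, trunc_S. unfold Rdiv. rewrite inv_pow2_S.
    pose proof (inv_pow2_pos (m + i)).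
    destruct (digit01 (S (m + i))) as [E|E]; [lia| |]; rewrite E; simpl INR; lra.
Qed.

Definition cylinder J y := trunc J <= y <= trunc J + / 2 ^ J.

Lemma cylinder_le m J y : (m <= J)%nat -> cylinder J y -> cylinder m y.
Proof. intros Hm [H1 H2]. destruct (trunc_nested m J Hm). split; lra. Qed.

Lemma cylinder_unit J y : cylinder J y -> 0 <= y <= 1.
Proof. intros Hy. destruct (cylinder_le 0 J y) as [H1 H2]; [lia|assumption|]. simpl in *. lra. Qed.

Lemma cylinder_self J : cylinder J x.
Proof. pose proof (trunc_lt J). split; lra. Qed.

Lemma dist_Z_on_cylinder n y : cylinder (S n) y ->
  dist_Z (2 ^ n * y) = if Nat.eq_dec (eps (S n)) 0 then 2 ^ n * (y - trunc (S n))
                       else /2 - 2 ^ n * (y - trunc (S n)).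
Proof.
  intros [H1 H2]. destruct (dyadic_at_trunc n n (le_n n)) as [M HM].
  pose proof (pow2_pos n).
  assert (Hs : 0 <= 2 ^ n * (y - trunc (S n)) <= /2).
  { split; [apply Rmult_le_pos; lra|].
    replace (/2) with (2 ^ n * / 2 ^ S n) by (simpl; field; lra).
    apply Rmult_le_compat_l; lra. }
  assert (E : 2 ^ n * y = IZR (Z.of_nat M) + INR (eps (S n)) / 2 + 2 ^ n * (y - trunc (S n))).
  { rewrite <- INR_IZR_INZ, trunc_S, HM. simpl. field. lra. }
  rewrite E. destruct (Nat.eq_dec (eps (S n)) 0) as [E0|E0].
  - rewrite E0. simpl INR. unfold Rdiv. rewrite Rmult_0_l, Rplus_0_r.
    apply dist_Z_near_int. assumption.
  - destruct (digit01 (S n)) as [E1|E1]; [lia|contradiction|].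
    rewrite E1. simpl INR. unfold Rdiv. rewrite Rmult_1_l. apply dist_Z_near_half. assumption.
Qed.

Lemma takagi_sum_diff_on_cylinder J y K : cylinder J y -> (K <= J)%nat ->
  takagi_sum K y - takagi_sum K x = (y - x) * digit_balance eps K.
Proof.
  intros Hy. induction K as [|K IHK]; intros HK; [simpl; ring|].
  assert (Hlin : dist_Z (2 ^ K * y) - dist_Z (2 ^ K * x)
                 = (1 - 2 * INR (eps (S K))) * 2 ^ K * (y - x)).
  { rewrite (dist_Z_on_cylinder K y), (dist_Z_on_cylinder K x)
      by (apply cylinder_self || (apply (cylinder_le _ J); [lia|assumption])).
    destruct (Nat.eq_dec (eps (S K)) 0) as [E0|E0].
    - rewrite E0. simpl INR. ring.
    - destruct (digit01 (S K)) as [E1|E1]; [lia|contradiction|]. rewrite E1. simpl INR. ring. }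
  simpl takagi_sum. simpl digit_balance.
  replace (takagi_sum K y + (/ 2) ^ K * dist_Z (2 ^ K * y)
           - (takagi_sum K x + (/ 2) ^ K * dist_Z (2 ^ K * x)))
    with ((takagi_sum K y - takagi_sum K x)
          + (/2) ^ K * (dist_Z (2 ^ K * y) - dist_Z (2 ^ K * x))) by ring.
  rewrite IHK, Hlin by lia.
  replace ((/ 2) ^ K * ((1 - 2 * INR (eps (S K))) * 2 ^ K * (y - x)))
    with ((/ 2) ^ K * 2 ^ K * ((1 - 2 * INR (eps (S K))) * (y - x))) by ring.
  rewrite pow_half_mul. ring.
Qed.

Lemma takagi_diff_approx J N y : cylinder J y -> (J <= N)%nat ->
  Rabs (takagi y - takagi x - (y - x) * digit_balance eps J)
    <= INR (N - J) * Rabs (y - x) + / 2 ^ N.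
Proof.
  intros Hy HJN.
  apply (takagi_diff_le x y _ _ N); [apply (cylinder_unit J), cylinder_self|
                                      apply (cylinder_unit J y Hy)|].
  intros K HK.
  pose proof (takagi_sum_lipschitz x y J (N - J)) as Hlip.
  pose proof (takagi_sum_tail_le x y N (K - N)) as Htail.
  cbv beta in Hlip, Htail.
  rewrite (takagi_sum_diff_on_cylinder J y J Hy (le_n J)) in Hlip.
  replace (J + (N - J))%nat with N in Hlip by lia.
  replace (N + (K - N))%nat with K in Htail by lia.
  pose proof (inv_pow2_pos K).
  pose proof (Rabs_sub_triang (takagi_sum K y - takagi_sum K x)
                (takagi_sum N y - takagi_sum N x) ((y - x) * digit_balance eps J)).
  lra.
Qed.

Lemma takagi_diff_exact J y : cylinder J y ->
  (forall n, (J <= n)%nat -> dist_Z (2 ^ n * y) = dist_Z (2 ^ n * x)) ->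
  takagi y - takagi x = (y - x) * digit_balance eps J.
Proof.
  intros Hy Hn.
  enough (Rabs (takagi y - takagi x - (y - x) * digit_balance eps J) <= 0)
    by (pose proof (Rabs_pos (takagi y - takagi x - (y - x) * digit_balance eps J));
        apply Rminus_diag_uniq, Rabs_eq_0; lra).
  apply (takagi_diff_le x y _ _ J); [apply (cylinder_unit J), cylinder_self|
                                      apply (cylinder_unit J y Hy)|].
  intros K HK. replace K with (J + (K - J))%nat by lia.
  induction (K - J)%nat as [|i IHi].
  - rewrite Nat.add_0_r, (takagi_sum_diff_on_cylinder J y J Hy (le_n J)),
      Rminus_diag, Rabs_R0. lra.
  - rewrite Nat.add_succ_r. simpl takagi_sum. rewrite Hn by lia.
    replace (takagi_sum (J + i) y + (/ 2) ^ (J + i) * dist_Z (2 ^ (J + i) * x)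
             - (takagi_sum (J + i) x + (/ 2) ^ (J + i) * dist_Z (2 ^ (J + i) * x))
             - (y - x) * digit_balance eps J)
      with (takagi_sum (J + i) y - takagi_sum (J + i) x - (y - x) * digit_balance eps J)
      by ring.
    assumption.
Qed.

Lemma trunc_run p i : (forall j, (p < j <= p + i)%nat -> eps j = 1%nat) ->
  trunc (p + i) = trunc p + / 2 ^ p - / 2 ^ (p + i).
Proof.
  intros Hr. induction i as [|i IHi].
  - rewrite Nat.add_0_r. ring.
  - rewrite Nat.add_succ_r, trunc_S, IHi by (intros; apply Hr; lia).
    rewrite Hr by lia. simpl INR. unfold Rdiv. rewrite inv_pow2_S. lra.
Qed.

(* x + 2 d is the mirror image of x in the dyadic point P = trunc (S J) + 2^-(S J); from
   level J on, every term dist_Z (2^n .) is symmetric about P (2^n P is an integer, or a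
   half-integer for n = J), so only the first J terms contribute to T(x + 2 d) - T(x). *)
Lemma takagi_diff_reflected J : eps (S J) = 0%nat ->
  let d := trunc (S J) + / 2 ^ S J - x in
  takagi (x + 2 * d) - takagi x = 2 * d * digit_balance eps J.
Proof.
  intros He0 d.
  pose proof (trunc_lt (S J)) as HxS.
  assert (HLJ : trunc (S J) = trunc J) by (rewrite trunc_S, He0; simpl; unfold Rdiv; ring).
  replace (2 * d) with (x + 2 * d - x) at 2 by ring.
  apply takagi_diff_exact.
  - unfold cylinder, d. rewrite inv_pow2_S in *. lra.
  - intros n Hn. set (P := trunc (S J) + / 2 ^ S J).
    replace (2 ^ n * (x + 2 * d)) with (2 ^ n * P + 2 ^ n * d) by (unfold d, P; ring).
    replace (2 ^ n * x) with (2 ^ n * P - 2 ^ n * d) by (unfold d, P; ring).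
    destruct (Nat.eq_dec n J) as [->|Hne].
    + destruct (dyadic_at_trunc J J (le_n J)) as [M HM].
      replace (2 ^ J * P) with (IZR (Z.of_nat M) + /2).
      * apply dist_Z_reflect_half.
      * unfold P. rewrite HLJ, HM, <- INR_IZR_INZ. simpl. field. apply pow_nonzero; lra.
    + destruct (dyadic_at_add n (trunc (S J)) 1 (S J)) as [M HM];
        [lia|apply dyadic_at_trunc; lia|].
      replace (2 ^ n * P) with (IZR (Z.of_nat M)).
      * apply dist_Z_reflect.
      * unfold P. replace (/ 2 ^ S J) with (INR 1 / 2 ^ S J) by (simpl; unfold Rdiv; ring).
        rewrite HM, <- INR_IZR_INZ. field. apply pow_nonzero; lra.
Qed.

Lemma takagi_quot_zero_digit J N h : eps (S J) = 0%nat -> (1 <= J)%nat -> (J < N)%nat ->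
  / 2 ^ N < h <= / 2 ^ S J ->
  Rabs (takagi_quot x h - balance_avg eps J) <= (2 * INR (N - J) + 1) / INR J.
Proof.
  intros He0 HJ HJN [HhN HhJ].
  pose proof (inv_pow2_pos N). pose proof (trunc_lt (S J)).
  assert (HLJ : trunc (S J) = trunc J) by (rewrite trunc_S, He0; simpl; unfold Rdiv; ring).
  assert (Hcyl : cylinder J (x + h)) by (unfold cylinder; rewrite inv_pow2_S in *; lra).
  pose proof (takagi_diff_approx J N (x + h) Hcyl (Nat.lt_le_incl _ _ HJN)) as Happrox.
  replace (x + h - x) with h in Happrox by ring. rewrite (Rabs_right h) in Happrox by lra.
  assert (Hlog_lo : INR (S J) <= log2 (/ h))
    by (rewrite <- log2_inv_pow2; apply log2_inv_le; [lra|assumption]).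
  assert (Hlog_hi : log2 (/ h) < INR N)
    by (rewrite <- log2_inv_pow2; apply log2_inv_lt; [apply inv_pow2_pos|assumption]).
  rewrite S_INR in Hlog_lo. pose proof (le_INR _ _ (Nat.lt_le_incl _ _ HJN)).
  replace (2 * INR (N - J) + 1) with ((INR (N - J) + 1) + INR (N - J)) by ring.
  apply takagi_quot_approx.
  - lra.
  - apply lt_0_INR. lia.
  - rewrite (Rabs_right h), minus_INR by (lra || lia). lra.
  - apply pos_INR.
  - apply digit_balance_abs_le, digit_le1.
  - rewrite (Rabs_right h) by lra. lra.
Qed.

Lemma takagi_quot_at_level m : (1 <= m)%nat -> exists h,
  / 2 ^ S m <= Rabs h <= / 2 ^ m /\
  Rabs (takagi_quot x h - balance_avg eps m) <= 3 / INR m.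
Proof.
  intros Hm. pose proof (trunc_lt m). pose proof (inv_pow2_pos m).
  assert (exists y, cylinder m y /\ / 2 ^ S m <= Rabs (y - x) <= / 2 ^ m) as [y [Hy Hyx]].
  { rewrite inv_pow2_S. destruct (Rle_dec (/ 2 * / 2 ^ m) (x - trunc m)).
    - exists (trunc m). split; [split; lra|]. rewrite Rabs_left; lra.
    - exists (trunc m + / 2 ^ m). split; [split; lra|]. rewrite Rabs_right; lra. }
  exists (y - x). split; [assumption|].
  pose proof (takagi_diff_approx m (S m) y Hy (Nat.le_succ_diag_r m)) as Happrox.
  replace (S m - m)%nat with 1%nat in Happrox by lia.
  replace y with (x + (y - x)) in Happrox at 1 by ring.
  assert (Hpos : 0 < Rabs (y - x)) by (pose proof (inv_pow2_pos (S m)); lra).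
  replace 3 with (2 + 1) by ring.
  apply takagi_quot_approx.
  - intros E. rewrite E, Rabs_R0 in Hpos. lra.
  - apply lt_0_INR. lia.
  - split.
    + rewrite <- log2_inv_pow2. apply log2_inv_le; lra.
    + rewrite <- S_INR, <- log2_inv_pow2. apply log2_inv_le; [apply inv_pow2_pos|lra].
  - lra.
  - apply digit_balance_abs_le, digit_le1.
  - simpl INR in Happrox. lra.
Qed.

Lemma takagi_quot_reflected J q : eps (S J) = 0%nat -> eps (S q) = 0%nat -> (S J <= q)%nat ->
  (forall j, (S J < j <= q)%nat -> eps j = 1%nat) -> exists h,
  0 < h < / 2 ^ (q - 1) /\ INR q - 1 < log2 (/ h) < INR q /\
  takagi_quot x h = digit_balance eps J / log2 (/ h).
Proof.
  intros HJ0 Hq0 HJq Hrun.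
  pose proof (trunc_run (S J) (q - S J)) as Htq.
  replace (S J + (q - S J))%nat with q in Htq by lia.
  specialize (Htq Hrun).
  pose proof (trunc_lt (S q)) as Hx.
  rewrite trunc_S, Hq0 in Hx. simpl INR in Hx. unfold Rdiv in Hx.
  rewrite Rmult_0_l, Rplus_0_r in Hx.
  pose proof (takagi_diff_reflected J HJ0) as Hdiff. cbv zeta in Hdiff.
  set (h := 2 * (trunc (S J) + / 2 ^ S J - x)) in *.
  assert (Hq : / 2 ^ (q - 1) = 2 * / 2 ^ q).
  { replace q with (S (q - 1)) at 2 by lia. rewrite inv_pow2_S. lra. }
  rewrite inv_pow2_S in Hx.
  assert (Hh : / 2 ^ q < h < / 2 ^ (q - 1)) by (unfold h; lra).
  pose proof (inv_pow2_pos q).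
  assert (Hlog : INR q - 1 < log2 (/ h) < INR q).
  { split.
    - replace (INR q - 1) with (INR (q - 1)) by (rewrite minus_INR by lia; reflexivity).
      rewrite <- log2_inv_pow2. apply log2_inv_lt; lra.
    - rewrite <- log2_inv_pow2. apply log2_inv_lt; [apply inv_pow2_pos|lra]. }
  exists h. split; [lra|]. split; [assumption|].
  unfold takagi_quot. rewrite Hdiff, Rabs_right by lra. field.
  pose proof (le_INR _ _ HJq) as HJq'. rewrite S_INR in HJq'. pose proof (pos_INR J). lra.
Qed.

End Truncation.

Lemma gap_lt_of_close g p u v lam kappa e eta : 0 < p -> 0 < Rabs (lam + kappa) ->
  eta <= Rabs (lam + kappa) / 2 -> eta <= e * Rabs (lam + kappa) / 8 ->
  Rabs (u - lam) < eta -> Rabs (v - lam) < eta ->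
  g * (v + kappa) = p * (u - v) -> Rabs g < e * p / 2.
Proof.
  intros Hp Hs Heta1 Heta2 Hu Hv Hg.
  assert (Hs2 : Rabs (lam + kappa) / 2 <= Rabs (v + kappa)).
  { pose proof (Rabs_triang_inv (lam + kappa) (lam - v)) as Htri.
    replace (lam + kappa - (lam - v)) with (v + kappa) in Htri by ring.
    rewrite Rabs_minus_sym in Hv. lra. }
  assert (Ht : Rabs (u - v) < e * Rabs (lam + kappa) / 4).
  { pose proof (Rabs_sub_triang u lam v) as Htri. rewrite (Rabs_minus_sym lam) in Htri. lra. }
  assert (Habs : Rabs g * Rabs (v + kappa) = p * Rabs (u - v))
    by (rewrite <- Rabs_mult, Hg, Rabs_mult, (Rabs_right p); lra).
  assert (He : 0 <= e) by (pose proof (Rabs_pos (u - v)); nra).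
  destruct (Rlt_dec (Rabs g) (e * p / 2)) as [|Hge]; [assumption|exfalso].
  assert (e * p / 2 * (Rabs (lam + kappa) / 2) <= Rabs g * Rabs (v + kappa))
    by (apply Rmult_le_compat; nra).
  nra.
Qed.

Lemma gap_error_lt J N e : 0 < e -> 18 < e * INR J -> (J < N)%nat ->
  INR N / INR (S J) < 1 + e / 12 -> (2 * INR (N - J) + 1) / INR J < e / 2.
Proof.
  intros He HJ HJN Hratio. rewrite S_INR in Hratio.
  assert (HJ1 : 1 <= INR J)
    by (destruct J; [simpl in HJ; lra|rewrite S_INR; pose proof (pos_INR J); lra]).
  assert (HNJ : INR N < (1 + e / 12) * (INR J + 1)).
  { apply (Rmult_lt_reg_r (/ (INR J + 1))); [apply Rinv_0_lt_compat; lra|].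
    rewrite Rmult_assoc, Rinv_r by lra. unfold Rdiv in Hratio. lra. }
  rewrite minus_INR by lia.
  apply (Rmult_lt_reg_r (INR J)); [lra|]. unfold Rdiv. rewrite Rmult_assoc, Rinv_l by lra.
  nra.
Qed.

Section GapsOfComplement.
Variables (x : R) (eps b : nat -> nat).
Hypothesis x_unit : 0 < x < 1.
Hypothesis x_nondyadic : ~ dyadic x.
Hypothesis x_expansion : binary_expansion x eps.
Hypothesis b_repr : power_sum_repr (1 - x) b.

Lemma b_incr n : (b n < b (S n))%nat.
Proof. apply b_repr. Qed.

Lemma b_ge n : (S n <= b n)%nat.
Proof. apply strict_incr_ge_id; [apply b_repr|apply b_incr]. Qed.

Let bsum k := dsum (fun _ => 1%nat) b k.

(* Since 1 - x = sum_j 2^(-b j), its truncation to n digits with b (k-1) <= n < b k is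
   the k-th partial sum of that series; comparing consecutive truncations reads the
   digits of x off the sequence b. *)
Lemma compl_trunc_bsum k n : (forall j, (j < k)%nat -> (b j <= n)%nat) -> (n < b k)%nat ->
  trunc (digit_compl eps) n = bsum k.
Proof.
  intros Hjk Hnk.
  apply (dyadic_at_unique n _ _ (1 - x)).
  - apply dyadic_at_trunc. lia.
  - apply dyadic_at_dsum. assumption.
  - apply (trunc_lt (1 - x)); [apply binary_expansion_compl|apply nondyadic_compl]; assumption.
  - assert (Hb : 0 < (1 - x) - bsum k < 2 / 2 ^ b k).
    { apply dsum_series_lt; [intros; lia|apply b_incr| |apply nondyadic_compl; assumption].
      eapply is_series_ext; [|apply b_repr]. intros j. simpl. unfold Rdiv. ring. }
    replace (2 / 2 ^ b k) with (/ 2 ^ (b k - 1)) in Hb.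
    + pose proof (inv_pow2_le n (b k - 1) ltac:(lia)). lra.
    + replace (b k) with (S (b k - 1)) at 2 by lia. unfold Rdiv. rewrite inv_pow2_S. lra.
Qed.

Lemma compl_digit_trunc n :
  INR (digit_compl eps (S n))
  = 2 ^ S n * (trunc (digit_compl eps) (S n) - trunc (digit_compl eps) n).
Proof. rewrite trunc_S. field. apply pow_nonzero. lra. Qed.

Lemma digit_at_b k : eps (b k) = 0%nat.
Proof.
  pose proof (b_ge k) as Hbk. destruct (b k) as [|n] eqn:Ebk; [lia|].
  pose proof (compl_digit_trunc n) as Hd.
  rewrite (compl_trunc_bsum (S k) (S n)), (compl_trunc_bsum k n) in Hd.
  - unfold bsum in Hd. simpl dsum in Hd. rewrite Ebk in Hd.
    assert (Hd1 : INR (digit_compl eps (S n)) = INR 1)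
      by (rewrite Hd; simpl; field; apply pow_nonzero; lra).
    apply INR_eq in Hd1. unfold digit_compl in Hd1.
    pose proof (digit01 x eps x_expansion (S n) ltac:(lia)). lia.
  - intros j Hj. pose proof (strict_incr_lt b b_incr j k Hj). lia.
  - lia.
  - intros j Hj. rewrite <- Ebk. apply (strict_incr_le b b_incr). lia.
  - rewrite <- Ebk. apply b_incr.
Qed.

Lemma digit_between_b k i : (b k < i < b (S k))%nat -> eps i = 1%nat.
Proof.
  intros Hi. destruct i as [|n]; [lia|].
  pose proof (compl_digit_trunc n) as Hd.
  rewrite (compl_trunc_bsum (S k) (S n)), (compl_trunc_bsum (S k) n), Rminus_diag, Rmult_0_r in Hd
    by (lia || (intros j Hj; pose proof (strict_incr_le b b_incr j k ltac:(lia)); lia)).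
  change 0 with (INR 0) in Hd. apply INR_eq in Hd. unfold digit_compl in Hd.
  pose proof (digit01 x eps x_expansion (S n) ltac:(lia)). lia.
Qed.

End GapsOfComplement.

Definition takagi_quot_right_lim x (c : R) := forall e, 0 < e ->
  exists d, 0 < d /\ forall h, 0 < h < d -> Rabs (takagi_quot x h - c) < e.

Section LimitsAtPoint.
Variables (x : R) (eps b : nat -> nat).
Hypothesis x_unit : 0 < x < 1.
Hypothesis x_nondyadic : ~ dyadic x.
Hypothesis x_expansion : binary_expansion x eps.
Hypothesis b_repr : power_sum_repr (1 - x) b.

Let b_incr := b_incr x b b_repr.
Let b_ge := b_ge x b b_repr.
Let digit_at_b := digit_at_b x eps b x_unit x_nondyadic x_expansion b_repr.
Let digit_between_b := digit_between_b x eps b x_unit x_nondyadic x_expansion b_repr.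

Let ratio n := INR (b (S n)) / INR (b n).

Lemma takagi_quot_right_lim_of_avg_lim (c : R) :
  is_lim_seq (balance_avg eps) c -> is_lim_seq ratio 1 -> takagi_quot_right_lim x c.
Proof.
  intros Hc Hr e He.
  destruct (proj1 (is_lim_seq_spec' _ _) Hr (e / 12) ltac:(lra)) as [N1 HN1].
  destruct (proj1 (is_lim_seq_spec' _ _) Hc (e / 2) ltac:(lra)) as [N3 HN3].
  destruct (eventually_mul_gt e 18 He) as [N2 HN2].
  set (n0 := (N1 + N2 + N3 + 1)%nat).
  exists (/ 2 ^ b n0). split; [apply inv_pow2_pos|]. intros h Hh.
  destruct (inv_pow2_bracket b b_ge h n0 Hh) as [n [Hnn0 [HhN HhJ]]].
  pose proof (b_ge n) as Hbn. pose proof (b_incr n) as HbS.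
  destruct (b n) as [|J] eqn:EJ; [lia|].
  pose proof (takagi_quot_zero_digit x eps x_expansion x_nondyadic J (b (S n)) h
                ltac:(rewrite <- EJ; apply digit_at_b) ltac:(lia) ltac:(lia) (conj HhN HhJ)) as Hq.
  specialize (HN3 J ltac:(lia)). specialize (HN1 n ltac:(lia)).
  unfold ratio in HN1. rewrite EJ in HN1. apply Rabs_lt_between in HN1.
  pose proof (gap_error_lt J (b (S n)) e He (HN2 J ltac:(lia)) ltac:(lia) ltac:(lra)).
  pose proof (Rabs_sub_triang (takagi_quot x h) (balance_avg eps J) c). lra.
Qed.

Lemma balance_avg_lim_of_quot_lim (l : R) :
  is_lim (takagi_quot x) 0 l -> is_lim_seq (balance_avg eps) l.
Proof.
  intros Hl. apply is_lim_seq_spec'. intros e He.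
  destruct (proj1 (is_lim_0_spec _ _) Hl (e / 2) ltac:(lra)) as [d [Hd Hd']].
  destruct (inv_pow2_eventually_lt d Hd) as [M1 HM1].
  destruct (eventually_mul_gt e 6 He) as [M2 HM2].
  exists (M1 + M2 + 1)%nat. intros m Hm.
  destruct (takagi_quot_at_level x eps x_expansion x_nondyadic m ltac:(lia)) as [h [Hh Hq]].
  assert (Hh0 : h <> 0)
    by (intros ->; rewrite Rabs_R0 in Hh; pose proof (inv_pow2_pos (S m)); lra).
  pose proof (Hd' h ltac:(pose proof (HM1 m ltac:(lia)); lra) Hh0).
  assert (3 / INR m < e / 2).
  { pose proof (HM2 m ltac:(lia)). assert (0 < INR m) by (apply lt_0_INR; lia).
    apply (Rmult_lt_reg_r (INR m)); [assumption|].
    unfold Rdiv. rewrite Rmult_assoc, Rinv_l by lra. lra. }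
  pose proof (Rabs_sub_triang (balance_avg eps m) (takagi_quot x h) l) as Htri.
  rewrite (Rabs_minus_sym (balance_avg eps m) (takagi_quot x h)) in Htri. lra.
Qed.

(* A density of ones below 1 forbids long runs of ones, i.e. long gaps in (b n). *)
Lemma b_ratio_lim_of_avg_lim (c : R) :
  is_lim_seq (balance_avg eps) c -> -1 < c -> is_lim_seq ratio 1.
Proof.
  intros Hc Hc1. apply is_lim_seq_spec'. intros e He.
  set (eta := Rmin ((c + 1) / 2) (e * (c + 1) / 8)).
  assert (Heta : 0 < eta) by (apply Rmin_pos; nra).
  assert (Heta1 : eta <= (c + 1) / 2) by apply Rmin_l.
  assert (Heta2 : eta <= e * (c + 1) / 8) by apply Rmin_r.
  destruct (proj1 (is_lim_seq_spec' _ _) Hc eta Heta) as [N3 HN3].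
  destruct (eventually_mul_gt e 2 He) as [M2 HM2].
  exists (M2 + N3)%nat. intros n Hn.
  pose proof (b_ge n) as Hbn. pose proof (b_incr n) as HbS. unfold ratio.
  destruct (b (S n)) as [|q] eqn:Eq; [lia|]. set (p := b n) in *.
  pose proof (digit_balance_run eps p (q - p)) as Hrun.
  replace (p + (q - p))%nat with q in Hrun by lia.
  rewrite minus_INR in Hrun by lia.
  specialize (Hrun (fun j Hj => digit_between_b n j ltac:(rewrite Eq; lia))).
  pose proof (HN3 p ltac:(lia)) as Hu. pose proof (HN3 q ltac:(lia)) as Hw.
  pose proof (HM2 p ltac:(lia)) as Hp2.
  unfold balance_avg in Hu, Hw.
  assert (Hp0 : 0 < INR p) by (apply lt_0_INR; lia).
  assert (Hq0 : 0 < INR q) by (apply lt_0_INR; lia).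
  assert (Hgap : Rabs (INR q - INR p) < e * INR p / 2).
  { apply (gap_lt_of_close _ _ (digit_balance eps p / INR p) (digit_balance eps q / INR q)
             c 1 e eta); rewrite ?(Rabs_right (c + 1)); try lra.
    rewrite Hrun. field. lra. }
  apply Rabs_div_sub1_lt; [assumption|]. rewrite S_INR.
  pose proof (Rabs_triang (INR q - INR p) 1) as Htri. rewrite Rabs_R1 in Htri.
  replace (INR q - INR p + 1) with (INR q + 1 - INR p) in Htri by ring. lra.
Qed.

(* At the points h of takagi_quot_reflected the quotient is exactly D_J / log2(1/h); if it
   converges to l <> 0 together with D_J / J, then log2(1/h) ~ J, and the gap from b n to
   b (n+1) is o(b n). *)
Lemma b_ratio_lim_of_quot_lim (l : R) :
  is_lim (takagi_quot x) 0 l -> l <> 0 -> is_lim_seq ratio 1.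
Proof.
  intros Hl Hl0. apply is_lim_seq_spec'. intros e He.
  pose proof (balance_avg_lim_of_quot_lim l Hl) as Havg.
  assert (Hsig : 0 < Rabs l) by (apply Rabs_pos_lt; assumption).
  set (eta := Rmin (Rabs l / 2) (e * Rabs l / 8)).
  assert (Heta : 0 < eta) by (apply Rmin_pos; nra).
  assert (Heta1 : eta <= Rabs l / 2) by apply Rmin_l.
  assert (Heta2 : eta <= e * Rabs l / 8) by apply Rmin_r.
  destruct (proj1 (is_lim_0_spec _ _) Hl eta Heta) as [d [Hd Hd']].
  destruct (inv_pow2_eventually_lt d Hd) as [M1 HM1].
  destruct (proj1 (is_lim_seq_spec' _ _) Havg eta Heta) as [N3 HN3].
  destruct (eventually_mul_gt e 2 He) as [M2 HM2].
  exists (M1 + M2 + N3 + 1)%nat. intros n Hn.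
  pose proof (b_ge n) as Hbn. pose proof (b_incr n) as HbS. unfold ratio.
  destruct (b n) as [|J] eqn:EJ; [lia|]. destruct (b (S n)) as [|q] eqn:Eq; [lia|].
  destruct (takagi_quot_reflected x eps x_expansion x_nondyadic J q)
    as [h [Hh [Hlog Hq]]].
  - rewrite <- EJ. apply digit_at_b.
  - rewrite <- Eq. apply digit_at_b.
  - lia.
  - intros j Hj. apply (digit_between_b n). rewrite EJ, Eq. lia.
  - set (v := digit_balance eps J / log2 (/ h)) in *.
    set (u := balance_avg eps J).
    assert (Hv : Rabs (v - l) < eta)
      by (rewrite <- Hq; apply Hd';
          [pose proof (HM1 (q - 1)%nat ltac:(lia)); rewrite Rabs_right; lra|lra]).
    pose proof (HN3 J ltac:(lia)) as Hu. fold u in Hu.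
    pose proof (HM2 J ltac:(lia)) as HJ2.
    assert (HJ0 : 0 < INR J) by (apply lt_0_INR; lia).
    assert (HJq : INR J + 1 <= INR q) by (rewrite <- S_INR; apply le_INR; lia).
    assert (Hgap : Rabs (log2 (/ h) - INR J) < e * INR J / 2).
    { apply (gap_lt_of_close _ _ u v l 0 e eta); rewrite ?Rplus_0_r; try lra.
      unfold u, v, balance_avg. field. split; lra. }
    apply Rabs_div_sub1_lt; [rewrite S_INR; lra|]. rewrite !S_INR.
    replace (INR q + 1 - (INR J + 1)) with ((log2 (/ h) - INR J) + (INR q - log2 (/ h))) by ring.
    pose proof (Rabs_triang (log2 (/ h) - INR J) (INR q - log2 (/ h))) as Htri.
    rewrite (Rabs_right (INR q - log2 (/ h))) in Htri by lra. lra.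
Qed.

End LimitsAtPoint.

Lemma is_lim_takagi_quot_compl x (l : R) : 0 < x < 1 ->
  is_lim (takagi_quot x) 0 l -> is_lim (takagi_quot (1 - x)) 0 (- l).
Proof.
  intros Hx Hl. apply is_lim_0_spec. intros e He.
  destruct (proj1 (is_lim_0_spec _ _) Hl e He) as [d [Hd Hd']].
  exists (Rmin d (Rmin x (1 - x))). split; [repeat apply Rmin_pos; lra|].
  intros h Hh Hh0. pose proof (Rmin_l d (Rmin x (1 - x))). pose proof (Rmin_r d (Rmin x (1 - x))).
  rewrite takagi_quot_compl by lra.
  replace (- takagi_quot x (- h) - - l) with (- (takagi_quot x (- h) - l)) by ring.
  rewrite Rabs_Ropp. apply Hd'; [rewrite Rabs_Ropp; lra|lra].
Qed.

Lemma is_lim_takagi_quot_of_right_lims x (l : R) : 0 < x < 1 ->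
  takagi_quot_right_lim x l -> takagi_quot_right_lim (1 - x) (- l) -> is_lim (takagi_quot x) 0 l.
Proof.
  intros Hx Hr Hl. apply is_lim_0_spec. intros e He.
  destruct (Hr e He) as [d1 [Hd1 Hd1']], (Hl e He) as [d2 [Hd2 Hd2']].
  exists (Rmin (Rmin d1 d2) (Rmin x (1 - x))). split; [repeat apply Rmin_pos; lra|].
  intros h Hh Hh0.
  pose proof (Rmin_l (Rmin d1 d2) (Rmin x (1 - x))).
  pose proof (Rmin_r (Rmin d1 d2) (Rmin x (1 - x))).
  pose proof (Rmin_l d1 d2). pose proof (Rmin_r d1 d2).
  destruct (Rlt_le_dec 0 h).
  - rewrite Rabs_right in Hh by lra. apply Hd1'. lra.
  - rewrite Rabs_left in Hh by lra.
    pose proof (takagi_quot_compl x (- h) ltac:(rewrite Rabs_Ropp, Rabs_left; lra)) as Hc.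
    rewrite Ropp_involutive in Hc.
    replace (takagi_quot x h - l) with (- (takagi_quot (1 - x) (- h) - - l)) by (rewrite Hc; ring).
    rewrite Rabs_Ropp. apply Hd2'. lra.
Qed.

Section Regularity.
Variables (x : R) (eps a b : nat -> nat).
Hypothesis x_unit : 0 < x < 1.
Hypothesis x_nondyadic : ~ dyadic x.
Hypothesis x_expansion : binary_expansion x eps.
Hypothesis a_repr : power_sum_repr x a.
Hypothesis b_repr : power_sum_repr (1 - x) b.

Let y_unit : 0 < 1 - x < 1.
Proof. lra. Qed.

Let y_nondyadic := nondyadic_compl x x_unit x_nondyadic.
Let y_expansion := binary_expansion_compl x eps x_expansion.

Let a_repr_compl : power_sum_repr (1 - (1 - x)) a.
Proof. replace (1 - (1 - x)) with x by ring. exact a_repr. Qed.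

Let digit_le1 := digit_le1 x eps x_expansion.

Lemma takagi_quot_lim_of_density_regular d :
  density_regular_with eps a b d -> is_lim (takagi_quot x) 0 ((1 - d) - d).
Proof.
  intros [Hd Hcase]. replace ((1 - d) - d) with (1 - 2 * d) by ring.
  apply has_density1_iff in Hd.
  pose proof (is_lim_seq_balance_avg_compl _ _ digit_le1 Hd) as Hd'.
  assert (Hb : is_lim_seq (fun n => INR (b (S n)) / INR (b n)) 1).
  { destruct Hcase as [Hd01|[[-> _]|[-> Hb]]]; [| |exact Hb];
      apply (b_ratio_lim_of_avg_lim x eps b x_unit x_nondyadic x_expansion b_repr _ Hd); lra. }
  assert (Ha : is_lim_seq (fun n => INR (a (S n)) / INR (a n)) 1).
  { destruct Hcase as [Hd01|[[-> Ha]|[-> _]]]; [| exact Ha|];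
      apply (b_ratio_lim_of_avg_lim (1 - x) _ a y_unit y_nondyadic y_expansion a_repr_compl
               _ Hd'); lra. }
  apply is_lim_takagi_quot_of_right_lims; [assumption| |].
  - apply (takagi_quot_right_lim_of_avg_lim x eps b x_unit x_nondyadic x_expansion b_repr);
      assumption.
  - apply (takagi_quot_right_lim_of_avg_lim (1 - x) _ a y_unit y_nondyadic y_expansion
             a_repr_compl);
      assumption.
Qed.

Lemma density_regular_of_takagi_quot_lim (l : R) :
  is_lim (takagi_quot x) 0 l -> density_regular eps a b.
Proof.
  intros Hl.
  pose proof (balance_avg_lim_of_quot_lim x eps x_nondyadic x_expansion l Hl) as Havg.
  pose proof (balance_avg_lim_bounded eps l digit_le1 Havg) as Hl1.
  exists ((1 - l) / 2). split.
  { apply has_density1_iff. replace (1 - 2 * ((1 - l) / 2)) with l by field. exact Havg. }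
  destruct (Req_dec l (-1)) as [->|Hm1]; [|destruct (Req_dec l 1) as [->|Hp1]].
  - right; right. split; [field|].
    apply (b_ratio_lim_of_quot_lim x eps b x_unit x_nondyadic x_expansion b_repr (-1) Hl). lra.
  - right; left. split; [field|].
    apply (b_ratio_lim_of_quot_lim (1 - x) _ a y_unit y_nondyadic y_expansion a_repr_compl (- 1)).
    + apply is_lim_takagi_quot_compl; assumption.
    + lra.
  - left. lra.
Qed.

End Regularity.

Theorem theorem2 (x : R) (eps a b : nat -> nat) :
  0 < x < 1 -> ~ dyadic x ->
  binary_expansion x eps ->
  power_sum_repr x a -> power_sum_repr (1 - x) b ->
  ((exists L : R, is_lim (takagi_quot x) 0 L) <-> density_regular eps a b) /\
  (forall d : R, density_regular_with eps a b d ->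
     is_lim (takagi_quot x) 0 ((1 - d) - d)).
Proof.
  intros Hx Hnd Hexp Ha Hb.
  split; [split|].
  - intros [l Hl]. exact (density_regular_of_takagi_quot_lim x eps a b Hx Hnd Hexp Ha Hb l Hl).
  - intros [d Hd]. exists ((1 - d) - d).
    exact (takagi_quot_lim_of_density_regular x eps a b Hx Hnd Hexp Ha Hb d Hd).
  - exact (takagi_quot_lim_of_density_regular x eps a b Hx Hnd Hexp Ha Hb).
Qed.
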